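(* Let $\mathcal G$ be a good pseudogroup on a compact metric space $X$ with good generating set $\mathcal G_1$, and suppose the compacted generating set $\mathcal G_2$ is symmetric. Then every Borel probability measure $\mu$ on $X$ which is $\mathcal G$-invariant, ergodic and $(\mathcal G,\mathcal G_2)$-homogeneous, and whose local upper measure entropy $\overline{h}_\mu((\mathcal G,\mathcal G_2),x)$ is positive for every $x\in X$, is $(\mathcal G,\mathcal G_1)$-expansive.
   Context: $\mathrm{Homeo}(X)$: homeomorphisms $g:D_g\to R_g$ between open subsets of $X$, composed on natural domains $D_{h\circ g}=g^{-1}(D_h)$; $g(A)$ means $g(A\cap D_g)$. A pseudogroup is a subset of $\mathrm{Homeo}(X)$ containing $\mathrm{id}_X$, closed under composition, inversion, restriction to open subsets, and gluing along open covers of the domain. $\Gamma$ generates $\mathcal G$ if $\bigcup_{g\in\Gamma}(D_g\cup R_g)=X$ and $\mathcal G$ is exactly the set of $g\in\mathrm{Homeo}(X)$ locally equal near each point of $D_g$ to a finite composition of elements of $\Gamma$ and their inverses; $\Gamma$ is symmetric if it contains $\mathrm{id}_X$ and is closed under inverses. A finite symmetric generating set $\mathcal G_1$ is good if for each $g\in\mathcal G_1$ there is a compact $K_g\subset D_g$ such that $\mathcal G_2=\{g|_{\mathrm{int}(K_g)}:g\in\mathcal G_1\}$ still generates $\mathcal G$ ($\mathcal G_2$ is the compacted generating set; $\mathcal G$ is good if it has a good generating set). For $i=1,2$: $\mathcal G^i_n=\{h_1\circ\cdots\circ h_n:h_j\in\mathcal G_i\}$, $\mathcal G^{i,x}_n=\{g\in\mathcal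 G^i_n:x\in D_g\}$, $B^i_n(x,\varepsilon)=\{y:d(g(x),g(y))<\varepsilon\ \forall g\in\mathcal G^{i,x}_n\cap\mathcal G^{i,y}_n\}$, $\Phi^i_\delta(x)=\{y:d(g(x),g(y))\le\delta\ \forall n,\ \forall g\in\mathcal G^{i,x}_n\cap\mathcal G^{i,y}_n\}$. $\mu$ is $\mathcal G$-invariant if $\mu(g(A))=\mu(A)$ for all $g\in\mathcal G$ and Borel $A\subset D_g$; it is ergodic if every Borel $A$ with $g(A\cap D_g)\subset A$ for all $g\in\mathcal G$ has $\mu(A)\in\{0,1\}$. $\mu$ is $(\mathcal G,\mathcal G_2)$-homogeneous if $\mu(K)<\infty$ for compact $K$, some compact $K_0$ has $\mu(K_0)>0$, and for every $\varepsilon>0$ there are $\delta,c>0$ with $\mu(B^2_n(y,\delta))\le c\,\mu(B^2_n(x,\varepsilon))$ for all $n,x,y$. $\overline{h}_\mu((\mathcal G,\mathcal G_2),x)=\lim_{\varepsilon\to0}\limsup_{n\to\infty}-\frac1n\log\mu(B^2_n(x,\varepsilon))$. $\mu$ is $(\mathcal G,\mathcal G_1)$-expansive if there is $\delta>0$ with $\mu(\Phi^1_\delta(x))=0$ for all $x\in X$. *)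

From HB Require Import structures.
From mathcomp Require Import all_boot all_order all_algebra.
From mathcomp Require Import all_classical all_reals all_analysis.
From Stdlib Require List.
Set Implicit Arguments. Unset Strict Implicit. Unset Printing Implicit Defensive.
Import Order.TTheory GRing.Theory Num.Theory.
Local Open Scope classical_set_scope.
Local Open Scope ring_scope.

(* A metric space whose carrier is nonempty (pointed); needed so that the
   Borel sigma-algebra type [g_sigma_algebraType] gets a measurable structure. *)
HB.structure Definition PointedMetric (R : numDomainType) :=
  {M of Metric R M & isPointed M}.

Notation borel X := (g_sigma_algebraType (@open X)).

Section PartialMaps.
Context {X : topologicalType}.

Definition parmap := X -> option X.

Definition pdom (g : parmap) : set X := [set x | exists y, g x = Some y].
Definition prng (g : parmap) : set X := [set y | exists x, g x = Some y].
Definition pimage (g : parmap) (A : set X) : set X :=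
  [set y | exists2 x, A x & g x = Some y].

Definition is_phomeo (g : parmap) : Prop :=
  [/\ open (pdom g), open (prng g),
      (forall x x' y, g x = Some y -> g x' = Some y -> x = x'),
      (* continuity of g on D_g *)
      (forall x y, g x = Some y -> forall V, nbhs y V ->
         nbhs x [set x' | forall y', g x' = Some y' -> V y'])
    & (* continuity of g^{-1} on R_g *)
      (forall x y, g x = Some y -> forall U, nbhs x U ->
         nbhs y [set y' | forall x', g x' = Some y' -> U x'])].

Definition pid : parmap := fun x => Some x.
Definition pcomp (h g : parmap) : parmap := fun x => obind h (g x).
Definition is_pinv (g h : parmap) : Prop :=
  forall x y, g x = Some y <-> h y = Some x.
Definition prestr (g : parmap) (U : set X) : parmap :=
  fun x => if `[< U x >] then g x else None.

(* h_1 o h_2 o ... o h_n for ws = [:: h_1; ...; h_n] (identity if n = 0) *)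
Definition pcomps (ws : seq parmap) : parmap := foldr pcomp pid ws.

Record pseudogroup (G : set parmap) : Prop := {
  pg_homeo : forall g, G g -> is_phomeo g;
  pg_id : G pid;
  pg_comp : forall g h, G g -> G h -> G (pcomp h g);
  pg_inv : forall g, G g -> exists2 h, G h & is_pinv g h;
  pg_restr : forall g U, G g -> open U -> G (prestr g U);
  pg_glue : forall g, is_phomeo g ->
     (forall x, pdom g x -> exists U, [/\ open U, U x & G (prestr g U)]) -> G g
}.

Definition generates (Gam G : set parmap) : Prop :=
  [/\ (forall g, Gam g -> is_phomeo g),
      (forall x, exists2 g, Gam g & pdom g x \/ prng g x)
    & (forall g, G g <->
        (is_phomeo g /\
         forall x, pdom g x -> exists U, [/\ open U, U x &
           exists ws : seq parmap,
             [/\ ws <> [::],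
                 (forall w, List.In w ws -> Gam w \/ exists2 h, Gam h & is_pinv h w)
               & forall y, U y -> g y = pcomps ws y]]))].

Definition gen_symmetric (Gam : set parmap) : Prop :=
  Gam pid /\ forall g, Gam g -> exists2 h, Gam h & is_pinv g h.

Definition compacted (Gam : set parmap) (K : parmap -> set X) : set parmap :=
  [set prestr g (interior (K g)) | g in Gam].

Definition good_generating (G Gam : set parmap) (K : parmap -> set X) : Prop :=
  [/\ finite_set Gam, gen_symmetric Gam, generates Gam G,
      (forall g, Gam g -> compact (K g) /\ K g `<=` pdom g)
    & generates (compacted Gam K) G].

Definition compn (Gam : set parmap) (n : nat) : set parmap :=
  [set g | exists ws : seq parmap,
     [/\ size ws = n, (forall w, List.In w ws -> Gam w) & g = pcomps ws]].

End PartialMaps.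

Section Metric.
Context {R : realType} {X : PointedMetric.type R}.

Definition dynball (Gam : set (@parmap X)) (n : nat) (x : X) (eps : R) : set X :=
  [set y | forall g, compn Gam n g -> forall a b,
     g x = Some a -> g y = Some b -> mdist a b < eps].

Definition Phi (Gam : set (@parmap X)) (delta : R) (x : X) : set X :=
  [set y | forall n g, compn Gam n g -> forall a b,
     g x = Some a -> g y = Some b -> mdist a b <= delta].

Definition mu_invariant (G : set (@parmap X)) (mu : probability (borel X) R) : Prop :=
  forall g (A : set (borel X)), G g -> measurable A -> A `<=` pdom g ->
    mu (pimage g A) = mu A.

Definition mu_ergodic (G : set (@parmap X)) (mu : probability (borel X) R) : Prop :=
  forall A : set (borel X), measurable A ->
    (forall g, G g -> pimage g (A `&` pdom g) `<=` A) ->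
    mu A = 0%E \/ mu A = 1%E.

(* (G, G_2)-homogeneity; the condition only involves the generating set G_2 *)
Definition mu_homogeneous (Gam : set (@parmap X)) (mu : probability (borel X) R) : Prop :=
  [/\ (forall K : set X, compact K -> (mu K < +oo)%E),
      (exists K0 : set X, compact K0 /\ (0 < mu K0)%E)
    & forall eps, 0 < eps -> exists delta c, [/\ 0 < delta, 0 < c &
        forall n x y, (mu (dynball Gam n y delta) <= c%:E * mu (dynball Gam n x eps))%E]].

Definition upper_entropy (Gam : set (@parmap X)) (mu : probability (borel X) R) (x : X)
  : \bar R :=
  lim ((limn_esup (fun n : nat =>
          (- ((n%:R)^-1)%:E * lne (mu (dynball Gam n x eps)))%E))
       @[eps --> (0 : R)^'+]).

Definition mu_expansive (Gam : set (@parmap X)) (mu : probability (borel X) R) : Prop :=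
  exists2 delta, 0 < delta & forall x, mu (Phi Gam delta x) = 0%E.

End Metric.

From HB Require Import structures.
From mathcomp Require Import all_boot all_order all_algebra.
From mathcomp Require Import all_classical all_reals all_analysis.
From mathcomp Require Import lra.
Set Implicit Arguments. Unset Strict Implicit. Unset Printing Implicit Defensive.
Import Order.TTheory GRing.Theory Num.Theory.
Local Open Scope classical_set_scope.
Local Open Scope ring_scope.

(* Positive local entropy at a single point x0 yields eps > 0 for which the
   measures of the balls B^2_n(x0, eps) become arbitrarily small, and
   homogeneity transports this to the balls B^2_n(y, delta) around every y.
   Every word of length n in the compacted generators is a restriction of a
   word of length n in G1, so Phi^1_(delta/2)(y) lies in every B^2_n(y, delta)
   and is therefore null. *)

Section PartialMaps.
Context {X : topologicalType}.
Implicit Types (g h : @parmap X) (Gam : set (@parmap X)).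

Definition pcontinuous g : Prop :=
  open (pdom g) /\ forall x y, g x = Some y -> forall V, nbhs y V ->
    nbhs x [set x' | forall y', g x' = Some y' -> V y'].

Definition ppreimage g (V : set X) : set X :=
  [set x | exists2 y, g x = Some y & V y].

Definition pforall g (S : set X) : set X :=
  [set x | forall y, g x = Some y -> S y].

Definition pextends g g' : Prop := forall x y, g x = Some y -> g' x = Some y.

Lemma is_phomeo_pcontinuous g : is_phomeo g -> pcontinuous g.
Proof. by case=> ? _ _ ? _; split. Qed.

Lemma open_ppreimage g V : pcontinuous g -> open V -> open (ppreimage g V).
Proof.
move=> [odom gcont] oV; rewrite openE => x [y gxy Vy].
have nV : nbhs y V by apply: open_nbhs_nbhs.
have ndom : nbhs x (pdom g) by apply: open_nbhs_nbhs; split => //; exists y.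
apply: filterS (filterI ndom (gcont _ _ gxy _ nV)) => z [[w gzw] H].
by exists w => //; apply: H.
Qed.

Lemma pdom_pcomp h g : pdom (pcomp h g) = ppreimage g (pdom h).
Proof.
apply/seteqP; split => x; rewrite /ppreimage /pdom /pcomp /=.
  by case: (g x) => [y [z hz]|[]] //; exists y => //; exists z.
by move=> [y -> [z hz]]; exists z.
Qed.

Lemma pcontinuous_pid : pcontinuous pid.
Proof.
split; last by move=> x y [<-] V; apply: filterS => z Vz y' [<-].
rewrite (_ : pdom (@pid X) = setT); first exact: openT.
by apply/seteqP; split => x // _; exists x.
Qed.

Lemma pcontinuous_pcomp h g :
  pcontinuous g -> pcontinuous h -> pcontinuous (pcomp h g).
Proof.
move=> gcont [hdom hcont]; split; first by rewrite pdom_pcomp; exact: open_ppreimage.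
move=> x z; rewrite /pcomp; case gx: (g x) => [y|] //= hyz V nV.
apply: filterS (gcont.2 _ _ gx _ (hcont _ _ hyz _ nV)) => x' H z'.
by case gx': (g x') => [y'|] //= hz'; exact: (H y' gx' z' hz').
Qed.

Lemma pcontinuous_compn Gam n g :
  (forall g, Gam g -> pcontinuous g) -> compn Gam n g -> pcontinuous g.
Proof.
move=> Gcont [ws [_ + ->]] {n g}; elim: ws => [|w ws IH] Hin /=.
  exact: pcontinuous_pid.
apply: pcontinuous_pcomp; first by apply: IH => v hv; apply: Hin; right.
by apply/Gcont/Hin; left.
Qed.

Lemma pforallE g S : pforall g S = ~` ppreimage g (~` S).
Proof.
apply/seteqP; split => x /=; first by move=> H [y gxy]; apply; exact: H.
by move=> H y gxy; apply: contrapT => Sy; apply: H; exists y.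
Qed.

Lemma pforallEU g S : pforall g S = ~` pdom g `|` ppreimage g S.
Proof.
apply/seteqP; split => x /=.
  case gx: (g x) => [y|] H; last by left => -[y]; rewrite gx.
  by right; exists y => //; apply: H.
case=> [ndom y gxy|[y gxy Sy] y' gxy']; first by case: ndom; exists y.
by move: gxy'; rewrite gxy => -[<-].
Qed.

Lemma closed_pforall g S : pcontinuous g -> closed S -> closed (pforall g S).
Proof.
by move=> gcont cS; rewrite pforallE closedC; apply: open_ppreimage; rewrite ?openC.
Qed.

Lemma pconstraintE g x (P : X -> X -> Prop) :
  [set y | forall a b, g x = Some a -> g y = Some b -> P a b] =
  if g x is Some a then pforall g (P a) else setT.
Proof.
case: (g x) => [a|]; apply/seteqP; split => y //=.
  by move=> H b; apply: H.
by move=> H _ b [<-]; apply: H.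
Qed.

Lemma finite_compn Gam n : finite_set Gam -> finite_set (compn Gam n).
Proof.
move=> Gfin; elim: n => [|n IH].
  by apply: (sub_finite_set _ (finite_set1 pid)) => g [[|w ws] [//= _ _ ->]].
apply: (@sub_finite_set _ _ (\bigcup_(h in Gam) pcomp h @` compn Gam n)).
  move=> g [[|w ws] [//= [sz] Hin ->]].
  exists w; first by apply: Hin; left.
  by exists (pcomps ws) => //; exists ws; split => // v hv; apply: Hin; right.
by apply: bigcup_finite => // h _; apply: finite_image.
Qed.

Lemma pextends_prestr g U : pextends (prestr g U) g.
Proof. by move=> x y; rewrite /prestr; case: ifP. Qed.

Lemma pextends_pcomp g g' h h' :
  pextends g g' -> pextends h h' -> pextends (pcomp h g) (pcomp h' g').
Proof.
move=> eg eh x z; rewrite /pcomp.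
by case gx: (g x) => [y|] //= hyz; rewrite (eg _ _ gx) /=; exact: eh.
Qed.

Lemma compn_pextends Gam1 Gam2 n g :
  (forall g, Gam2 g -> exists2 g', Gam1 g' & pextends g g') ->
  compn Gam2 n g -> exists2 g', compn Gam1 n g' & pextends g g'.
Proof.
move=> ext [ws [<- + ->]] {n g}; elim: ws => [|w ws IH] Hin /=.
  by exists pid => //; exists [::].
have [_ [ws' [sz Hin' ->]] ews] := IH (fun v hv => Hin v (or_intror hv)).
have [w' Gw' ew] := ext w (Hin w (or_introl erefl)).
exists (pcomp w' (pcomps ws')); last exact: pextends_pcomp.
by exists (w' :: ws'); split => //= [|v [<-|hv]]; [rewrite sz | | apply: Hin'].
Qed.

Lemma compacted_pextends Gam K g :
  compacted Gam K g -> exists2 g', Gam g' & pextends g g'.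
Proof. by move=> [g' Gg' <-]; exists g' => //; exact: pextends_prestr. Qed.

End PartialMaps.

Lemma measure0_sub_small {R : realType} {d} {T : measurableType d}
    (mu : {measure set T -> \bar R}) (A : set T) (B : nat -> set T) :
  measurable A -> (forall n, measurable (B n)) -> (forall n, A `<=` B n) ->
  (forall eta, 0 < eta -> exists n, (mu (B n) < eta%:E)%E) -> mu A = 0%E.
Proof.
move=> mA mB AB small; apply/eqP; rewrite eq_le measure_ge0 andbT.
apply/lee_addgt0Pr => eta eta0; rewrite add0e.
have [n /ltW Bn] := small eta eta0.
by apply: le_trans Bn; apply: le_measure; rewrite ?inE.
Qed.

Section BowenBalls.
Context {R : realType} {X : PointedMetric.type R}.
Implicit Types (Gam : set (@parmap X)) (mu : probability (borel X) R).
Implicit Types (delta eps eta : R).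

Lemma open_mdist_lt (a : X) (e : R) : open [set b | mdist a b < e].
Proof.
rewrite openE => b ab; have e0 : 0 < e - mdist a b by rewrite subr_gt0.
apply: filterS (nbhsx_ballx b _ e0) => c; rewrite ballEmdist /= => bc.
by have := metric_triangle a b c; lra.
Qed.

Lemma closed_mdist_le (a : X) (e : R) : closed [set b | mdist a b <= e].
Proof.
rewrite (_ : [set b | _] = ~` [set b | e < mdist a b]); last first.
  apply/seteqP; split => b /=; first by move=> ab; rewrite ltNge ab.
  by move/negP; rewrite -leNgt.
rewrite closedC openE => b ab; have e0 : 0 < mdist a b - e by rewrite subr_gt0.
apply: filterS (nbhsx_ballx b _ e0) => c; rewrite ballEmdist /= => bc.
by have := metric_triangle a c b; rewrite (metric_sym c b); lra.
Qed.

Lemma measurable_open (A : set X) : open A -> measurable (A : set (borel X)).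
Proof. by move=> oA; apply: sub_sigma_algebra. Qed.

Lemma measurable_dynball Gam n x eps :
  finite_set Gam -> (forall g, Gam g -> pcontinuous g) ->
  measurable (dynball Gam n x eps : set (borel X)).
Proof.
move=> Gfin Gcont.
change (measurable (\bigcap_(g in compn Gam n)
  [set y | forall a b, g x = Some a -> g y = Some b -> mdist a b < eps] : set (borel X))).
apply: fin_bigcap_measurable; first exact: finite_compn.
move=> g /(pcontinuous_compn Gcont) gcont; rewrite pconstraintE.
case: (g x) => [a|]; last exact: measurableT.
rewrite pforallEU; apply: measurableU.
  by apply: measurableC; apply: measurable_open; exact: gcont.1.
by apply: measurable_open; apply: open_ppreimage => //; exact: open_mdist_lt.
Qed.

Lemma measurable_closed (A : set X) : closed A -> measurable (A : set (borel X)).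
Proof.
by move=> cA; rewrite -[A]setCK; apply: measurableC; apply: measurable_open; rewrite openC.
Qed.

Lemma closed_Phi Gam delta x :
  (forall g, Gam g -> pcontinuous g) -> closed (Phi Gam delta x).
Proof.
move=> Gcont; rewrite (_ : Phi _ _ _ = \bigcap_n \bigcap_(g in compn Gam n)
    [set y | forall a b, g x = Some a -> g y = Some b -> mdist a b <= delta]).
  apply: closed_bigI => n _; apply: closed_bigI => g /(pcontinuous_compn Gcont) gcont.
  rewrite pconstraintE; case: (g x) => [a|]; last exact: closedT.
  by apply: closed_pforall => //; exact: closed_mdist_le.
by apply/seteqP; split => y /= H n => [_|] g; exact: H.
Qed.

Lemma Phi_sub_dynball Gam1 Gam2 delta eps n x :
  (forall g, Gam2 g -> exists2 g', Gam1 g' & pextends g g') -> delta < eps ->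
  Phi Gam1 delta x `<=` dynball Gam2 n x eps.
Proof.
move=> ext lt_delta_eps y Phiy g g2 a b gxa gyb.
have [g' g1 eg] := compn_pextends ext g2.
by apply: le_lt_trans lt_delta_eps; apply: (Phiy n g' g1); apply: eg.
Qed.

Lemma homogeneous_dynball_small Gam mu x eps :
  mu_homogeneous Gam mu -> 0 < eps ->
  (forall eta, 0 < eta -> exists n, (mu (dynball Gam n x eps) < eta%:E)%E) ->
  exists2 delta, 0 < delta & forall y eta, 0 < eta ->
    exists n, (mu (dynball Gam n y delta) < eta%:E)%E.
Proof.
move=> [_ _ hom] eps0 small; have [delta [c [delta0 c0 Hc]]] := hom eps eps0.
exists delta => // y eta eta0; have [n Hn] := small (eta / c) (divr_gt0 eta0 c0).
exists n; apply: le_lt_trans (Hc n x y) _.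
have -> : eta = c * (eta / c) by rewrite mulrCA divff ?mulr1 // gt_eqF.
by rewrite EFinM lte_pmul2l.
Qed.

Lemma cvg_neg_log_rate0 (m : nat -> \bar R) eta : 0 < eta ->
  (forall n, (eta%:E <= m n <= 1)%E) ->
  (- (n%:R^-1)%:E * lne (m n))%E @[n --> \oo] --> 0%E.
Proof.
move=> eta0 bound; pose L := - ln eta.
apply: (@squeeze_cvge _ _ _ _ (cst 0%E) _ (fun n => (n%:R^-1 * L)%:E)).
- apply: nearW => n; move: (bound n); case: (m n) => [r||] //; last first.
    by rewrite leye_eq andbF.
  rewrite !lee_fin => /andP[eta_r r1]; have r0 : 0 < r by apply: lt_le_trans eta_r.
  rewrite lne_EFin // -EFinN -EFinM !lee_fin mulNr oppr_ge0 -mulrN.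
  rewrite mulr_ge0_le0 ?invr_ge0 ?ln_le0 //=.
  by rewrite ler_wpM2l ?invr_ge0 // lerN2 ler_ln ?posrE.
- exact: cvg_cst.
- rewrite -[0%E]/(0%:E); apply: cvg_EFin; first exact: nearW.
  rewrite -(mul0r L); apply: cvgMl; apply/gtr0_cvgV0; last exact: cvgr_idn.
  by near=> n; rewrite ltr0n; near: n; exact: nbhs_infty_gt.
Unshelve. all: by end_near.
Qed.

Lemma upper_entropy_gt0_dynball_small Gam mu x :
  (forall n eps, measurable (dynball Gam n x eps : set (borel X))) ->
  (0 < upper_entropy Gam mu x)%E ->
  exists2 eps, 0 < eps & forall eta, 0 < eta ->
    exists n, (mu (dynball Gam n x eps) < eta%:E)%E.
Proof.
move=> mB ent; apply: contrapT => nsmall.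
suff : upper_entropy Gam mu x = 0%E by move=> ent0; move: ent; rewrite ent0 ltxx.
apply: cvg_lim => //; apply: cvg_near_cst; near=> eps.
have eps0 : 0 < eps by near: eps; exact: nbhs_right_gt.
have [eta eta0 bounded] :
    exists2 eta, 0 < eta & forall n, (eta%:E <= mu (dynball Gam n x eps))%E.
  apply: contrapT => nbounded; apply: nsmall; exists eps => // eta eta0.
  apply: contrapT => nlt; apply: nbounded; exists eta => // n.
  by rewrite leNgt; apply/negP => lt; apply: nlt; exists n.
have bound n : (eta%:E <= mu (dynball Gam n x eps) <= 1)%E.
  by rewrite bounded probability_le1.
by have [_ ->] := cvg_limn_einf_sup (cvg_neg_log_rate0 eta0 bound).
Unshelve. all: by end_near.
Qed.

End BowenBalls.

Theorem mainTheorem16 (R : realType) (X : PointedMetric.type R)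
  (G G1 : set (@parmap X)) (K : @parmap X -> set X) :
  compact [set: X] ->
  pseudogroup G ->
  good_generating G G1 K ->
  gen_symmetric (compacted G1 K) ->
  forall mu : probability (borel X) R,
    mu_invariant G mu ->
    mu_ergodic G mu ->
    mu_homogeneous (compacted G1 K) mu ->
    (forall x : X, (0 < upper_entropy (compacted G1 K) mu x)%E) ->
    mu_expansive G1 mu.
Proof.
move=> _ _ [G1fin _ [G1homeo _ _] _ [G2homeo _ _]] _ mu _ _ hom ent.
have G1cont g : G1 g -> pcontinuous g by move/G1homeo/is_phomeo_pcontinuous.
have G2cont g : compacted G1 K g -> pcontinuous g by move/G2homeo/is_phomeo_pcontinuous.
have mB n x eps : measurable (dynball (compacted G1 K) n x eps : set (borel X)).
  by apply: measurable_dynball G2cont; exact: finite_image.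
have [eps eps0 small] := upper_entropy_gt0_dynball_small (mB ^~ point) (ent point).
have [delta delta0 small_everywhere] := homogeneous_dynball_small hom eps0 small.
exists (delta / 2) => [|y]; first by rewrite divr_gt0.
apply: (measure0_sub_small _ _ _ (small_everywhere y)) => [|n|n].
- by apply: measurable_closed; exact: closed_Phi.
- exact: mB.
- by apply: Phi_sub_dynball; [exact: compacted_pextends | lra].
Qed.
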